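(* There exists a family $\mathcal{T}\subset\mathcal{L}$ with $|\mathcal{T}|=2^{\mathfrak{c}}$ such that for every $\tau\in\mathcal{T}$ the space $(\mathbb{R},\tau)$ is a completely normal Baire space, and for distinct $\tau,\tau'\in\mathcal{T}$ the spaces $(\mathbb{R},\tau)$ and $(\mathbb{R},\tau')$ are not homeomorphic.
   Context: $\mathfrak{c}=|\mathbb{R}|$. $\eta$ denotes the Euclidean topology on $\mathbb{R}$. $\mathcal{L}$ denotes the family of all Hausdorff topologies $\tau$ on the set $\mathbb{R}$ with $\tau\subset\eta$ (i.e. coarser than the Euclidean topology). *)

From HB Require Import structures.
From mathcomp Require Import all_boot all_algebra.
From mathcomp Require Import all_classical all_reals all_analysis.
From mathcomp Require Import Rstruct Rstruct_topology.
From Stdlib Require Import Reals.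

Set Implicit Arguments. Unset Strict Implicit. Unset Printing Implicit Defensive.
Local Open Scope classical_set_scope.

Definition is_topology (tau : set (set R)) : Prop :=
  [/\ tau setT, tau set0,
      (forall F : set (set R), F `<=` tau -> tau (\bigcup_(U in F) U)) &
      (forall U V, tau U -> tau V -> tau (U `&` V))].

Definition coarser_than_euclid (tau : set (set R)) : Prop :=
  forall U, tau U -> open (U : set R).

Definition hausdorff_top (tau : set (set R)) : Prop :=
  forall x y : R, x <> y ->
    exists U V, [/\ tau U, tau V, U x, V y & U `&` V = set0].

Definition in_L (tau : set (set R)) : Prop :=
  [/\ is_topology tau, hausdorff_top tau & coarser_than_euclid tau].

Definition tclosed (tau : set (set R)) (F : set R) : Prop := tau (~` F).

(* The subspace S of (R, tau) is normal: disjoint relatively closed subsets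
   of S have disjoint relatively open neighbourhoods in S. *)
Definition normal_subspace (tau : set (set R)) (S : set R) : Prop :=
  forall F1 F2 : set R, tclosed tau F1 -> tclosed tau F2 ->
    S `&` F1 `&` F2 = set0 ->
    exists U V, [/\ tau U, tau V, S `&` F1 `<=` U, S `&` F2 `<=` V &
                    S `&` U `&` V = set0].

(* Completely (= hereditarily) normal: every subspace is normal. *)
Definition completely_normal (tau : set (set R)) : Prop :=
  forall S : set R, normal_subspace tau S.

Definition tdense (tau : set (set R)) (D : set R) : Prop :=
  forall U, tau U -> U !=set0 -> U `&` D !=set0.

Definition baire (tau : set (set R)) : Prop :=
  forall G : nat -> set R, (forall n, tau (G n)) -> (forall n, tdense tau (G n)) ->
    tdense tau (\bigcap_n G n).

Definition homeomorphic (tau tau' : set (set R)) : Prop :=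
  exists (f g : R -> R), [/\ cancel f g, cancel g f,
    (forall V, tau' V -> tau (f @^-1` V)) &
    (forall U, tau U -> tau' (g @^-1` U))].

(* For X a set of reals, tau_of X is the Euclidean topology except at 0, whose
   neighbourhoods must also contain balls of a fixed radius around the points
   n + 1 for all n in a member of a filter on nat.  The filter is generated by
   the cofinite sets and the complements of the branches of the points of X,
   where the branch of r codes the initial segments of the Dedekind cut of r;
   branches of distinct reals are almost disjoint, so X can be read off the
   topology.  Away from 0 the space is metric, and 0 is handled separately:
   this gives complete normality, while Baire's theorem transfers because a set
   dense for tau_of X is Euclidean-dense.
   A homeomorphism from a fixed tau_of Z onto tau_of X is Euclidean-continuous
   except at the preimage of 0, hence determined by countably many reals; so a
   homeomorphism class contains at most continuum many tau_of X, and König's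
   diagonal argument then yields 2^c pairwise non-homeomorphic ones. *)

From mathcomp Require Import all_boot all_algebra.
From mathcomp Require Import all_classical all_reals all_analysis.
From mathcomp Require Import Rstruct Rstruct_topology.
From Stdlib Require Import Reals.
From mathcomp Require Import lra zify.
Import mathcomp.order.order.Order.TTheory GRing.Theory Num.Theory.
Local Open Scope classical_set_scope.
Local Open Scope ring_scope.
Bind Scope ring_scope with R.

Lemma open_has_ball {U : set R} {x : R} :
  open U -> U x -> exists2 r, 0 < r & ball x r `<=` U.
Proof. by move=> oU Ux; have /nbhs_ballP [r r0 rU] := oU x Ux; exists r. Qed.

Lemma ballR_open (x r : R) : open (ball x r).
Proof. exact: (@ball_open _ R^o). Qed.

Lemma open_neq0 : open (~` [set (0 : R)]).
Proof. by rewrite openC; apply/accessible_closed_set1/hausdorff_accessible/Rhausdorff. Qed.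

Lemma ball_disjoint {x y r z : R} : 2 * r <= `|x - y| -> ball x r z -> ~ ball y r z.
Proof. by move=> rxy xz /ball_sym zy; have := ball_triangle xz zy; rewrite /ball /=; lra. Qed.

Definition rat_seq (n : nat) : R := if @unpickle rat n is Some q then ratr q else 0.

Lemma rat_seq_dense (x : R) {d : R} : 0 < d -> exists n, ball x d (rat_seq n).
Proof.
move=> d0; have [z [xz [q _ qz]]] := dense_rat (ex_intro _ x (ballxx x d0)) (ballR_open x d).
by exists (pickle q); rewrite /rat_seq pickleK qz.
Qed.

Definition cut (x : R) (n : nat) : bool := rat_seq n < x.

Lemma cut_lt (x y : R) : x < y -> exists n, ~~ cut x n && cut y n.
Proof.
move=> xy; have d0 : 0 < (y - x) / 2 by lra.
have [n] := rat_seq_dense ((x + y) / 2) d0.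
rewrite /ball /= ltr_distlC => /andP [lo hi]; exists n.
by rewrite /cut -leNgt; apply/andP; split; lra.
Qed.

Lemma cut_inj : injective cut.
Proof.
move=> x y e; apply/eqP; rewrite eq_le !leNgt.
by apply/andP; split; apply/negP => /cut_lt [n]; rewrite e andNb.
Qed.

(** * Coding sequences of reals by reals *)

Lemma exp3V_gt0 k : 0 < 3 ^- k :> R.
Proof. by rewrite invr_gt0 exprn_gt0. Qed.

Lemma exp3VS k : 3 ^- k.+1 = 3 ^- k / 3 :> R.
Proof. by rewrite exprSr invfM. Qed.

Fixpoint ternary_sum (b : nat -> bool) (n : nat) : R :=
  if n is m.+1 then ternary_sum b m + (if b m then 2 * 3 ^- m.+1 else 0) else 0.

Lemma ternary_sum_mono b n m : ternary_sum b n <= ternary_sum b (n + m).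
Proof.
elim: m => [|m IH]; first by rewrite addn0.
by rewrite addnS /=; have := exp3V_gt0 (n + m).+1; case: (b _) => ?; lra.
Qed.

Lemma ternary_sum_tail b n m :
  ternary_sum b (n + m) <= ternary_sum b n + 3 ^- n - 3 ^- (n + m).
Proof.
elim: m => [|m IH]; first by rewrite addn0; lra.
by rewrite addnS /= exp3VS; have := exp3V_gt0 (n + m); case: (b _) => ?; lra.
Qed.

Definition ternary (b : nat -> bool) : R := sup (range (ternary_sum b)).

Lemma ternary_sum_le_ternary b n : ternary_sum b n <= ternary b.
Proof.
apply: sup_upper_bound; last by exists n.
split; first by exists (ternary_sum b 0), 0%nat.
exists 1 => _ [m _ <-]; have := ternary_sum_tail b 0 m.
rewrite add0n /= expr0 invr1; have := exp3V_gt0 m; lra.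
Qed.

(* The expansion has digits 0 and 2 in base 3, so the first digit where [b] and
   [c] differ decides the order of their values. *)
Lemma ternary_lt (b c : nat -> bool) (k : nat) :
  (forall i : nat, (i < k)%nat -> b i = c i) -> b k -> ~~ c k -> ternary c < ternary b.
Proof.
move=> bc bk ck.
have c_le : ternary c <= ternary_sum c k + 3 ^- k / 3.
  apply: ge_sup; first by exists (ternary_sum c 0), 0%nat.
  move=> _ [n _ <-]; have := exp3V_gt0 k; have := exp3V_gt0 n.
  case: (leqP n k) => nk.
  - by have := ternary_sum_mono c n (k - n); rewrite subnKC //; lra.
  - have := ternary_sum_tail c k.+1 (n - k.+1); rewrite subnKC //=.
    by rewrite (negbTE ck) exp3VS; lra.
have := ternary_sum_le_ternary b k.+1; rewrite /= bk exp3VS.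
have -> : ternary_sum b k = ternary_sum c k.
  by elim: k bc {bk ck c_le} => //= k IH bc; rewrite IH ?bc // => i ik; apply: bc; lia.
by have := exp3V_gt0 k; lra.
Qed.

Lemma ternary_inj : injective ternary.
Proof.
move=> b c e; apply/funext => n; apply/eqP/negPn/negP => ne.
have [k nek mink] := ex_minnP (ex_intro (fun k => b k != c k) n ne).
have agree i : (i < k)%nat -> b i = c i.
  by move=> ik; apply/eqP; apply: contraTT ik => /mink; rewrite -leqNgt.
move: nek; case bk: (b k); case ck: (c k) => // _.
- by have := ternary_lt b c k agree bk (negbT ck); rewrite e ltxx.
- have := ternary_lt c b k (fun i ik => esym (agree i ik)) ck (negbT bk).
  by rewrite e ltxx.
Qed.

Definition encode_seq (u : nat -> R) : R :=
  ternary (fun n =>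
    if @unpickle (nat * nat)%type n is Some (a, m) then cut (u a) m else false).

Lemma encode_seq_inj : injective encode_seq.
Proof.
move=> u v /ternary_inj e; apply/funext => a; apply: cut_inj; apply/funext => m.
by have := congr1 (fun f => f (pickle (a, m))) e; rewrite /= pickleK.
Qed.

Definition encode_pair (p : (nat -> R) * R) : R :=
  encode_seq (fun n => if n is k.+1 then p.1 k else p.2).

Lemma encode_pair_inj : injective encode_pair.
Proof.
move=> [j r] [j' r'] /encode_seq_inj e; congr pair.
- by apply/funext => k; have := congr1 (fun f => f k.+1) e.
- by have := congr1 (fun f => f 0%nat) e.
Qed.

(** * Almost disjoint branches *)

Fixpoint nat_of_bits (s : seq bool) : nat :=
  if s is b :: s' then (2 * nat_of_bits s' + b).+1 else 0.

Lemma nat_of_bits_inj : injective nat_of_bits.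
Proof.
elim=> [|b s IH] [|b' s'] //= e.
have bb' : b = b' by case: b e; case: b' => /=; lia.
by rewrite bb' (IH s') //; move: e; rewrite bb'; lia.
Qed.

Lemma size_le_nat_of_bits s : (size s <= nat_of_bits s)%nat.
Proof. by elim: s => [|b s IH] //=; lia. Qed.

Definition branch (r : R) : set nat := range (fun k => nat_of_bits (mkseq (cut r) k)).

(* The filter generated by the cofinite sets and the complements of the
   branches of the points of [X]. *)
Definition branch_filter (X : set R) : set (set nat) :=
  [set I | exists (L : seq nat) (l : seq R), (forall r, r \in l -> X r) /\
     forall n, n \notin L -> (forall r, r \in l -> ~ branch r n) -> I n].

Lemma branch_filterT X : branch_filter X setT.
Proof. by exists [::], [::]. Qed.

Lemma branch_filterI X I J :
  branch_filter X I -> branch_filter X J -> branch_filter X (I `&` J).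
Proof.
move=> [L [l [lX hI]]] [L' [l' [l'X hJ]]]; exists (L ++ L'), (l ++ l'); split.
  by move=> r; rewrite mem_cat => /orP [/lX|/l'X].
move=> n; rewrite mem_cat negb_or => /andP [nL nL'] nb; split.
- by apply: hI => // r rl; apply: nb; rewrite mem_cat rl.
- by apply: hJ => // r rl; apply: nb; rewrite mem_cat rl orbT.
Qed.

Lemma branch_filterS X I J : I `<=` J -> branch_filter X I -> branch_filter X J.
Proof. by move=> IJ [L [l [lX hI]]]; exists L, l; split => // n nL nb; apply/IJ/hI. Qed.

Lemma branch_filter_ge X m : branch_filter X [set n | (m <= n)%nat].
Proof. by exists (iota 0 m), [::]; split => // n; rewrite mem_iota /= => nm _; lia. Qed.

Lemma branch_filter_branchC X t : X t -> branch_filter X (~` branch t).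
Proof.
move=> Xt; exists [::], [:: t]; split; first by move=> r; rewrite inE => /eqP ->.
by move=> n _; apply; rewrite inE.
Qed.

(* Branches of distinct reals meet in finitely many points, so finitely many
   other branches and a finite set cannot cover the infinite branch of [t]. *)
Lemma branchC_notin_filter X t : ~ X t -> ~ branch_filter X (~` branch t).
Proof.
move=> Xt [L [l [lX hI]]].
have /choice [d hd] : forall s, exists j, s \in l -> cut s j != cut t j.
  move=> s; have [/lX Xs|] := pselect (s \in l); last by exists 0%nat.
  have /existsNP [j /eqP hj] : ~ forall j, cut s j = cut t j.
    by move=> /funext /cut_inj st; apply: Xt; rewrite -st.
  by exists j.
pose K := maxn (\max_(x <- L) x.+1) (\max_(s <- l) (d s).+1).
have KL x : x \in L -> (x < K)%nat.
  by move=> xL; apply: leq_trans (leq_maxl _ _); exact: (leq_bigmax_seq _ xL).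
have Kl s : s \in l -> (d s < K)%nat.
  by move=> sl; apply: leq_trans (leq_maxr _ _); exact: (leq_bigmax_seq _ sl).
pose n := nat_of_bits (mkseq (cut t) K).
have Kn : (K <= n)%nat by have := size_le_nat_of_bits (mkseq (cut t) K); rewrite size_mkseq.
apply: (hI n); last by exists K.
- by apply/negP => /KL; lia.
- move=> s sl [k _ /nat_of_bits_inj eK].
  have kK : k = K by have := congr1 size eK; rewrite !size_mkseq.
  have := congr1 (fun w => nth false w (d s)) eK; rewrite kK !nth_mkseq ?Kl //.
  by move/eqP; rewrite (negbTE (hd s sl)).
Qed.

(** * The topologies [tau_of X] *)

Definition pt (n : nat) : R := n.+1%:R.

Definition nbhs0 (e : R) (I : set nat) : set R :=
  ball (0 : R) e `|` \bigcup_(n in I) ball (pt n) e.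

Definition tau_of (X : set R) : set (set R) :=
  [set U : set R | open U /\
     (U 0 -> exists2 e, 0 < e & exists2 I, branch_filter X I & nbhs0 e I `<=` U)].

Lemma nbhs0_open e I : open (nbhs0 e I).
Proof. by apply: openU; last apply: bigcup_open => n _; exact: ballR_open. Qed.

Lemma nbhs0_0 e I : 0 < e -> nbhs0 e I 0.
Proof. by move=> e0; left; exact: ballxx. Qed.

Lemma nbhs0_tau X e I : 0 < e -> branch_filter X I -> tau_of X (nbhs0 e I).
Proof. by move=> e0 fI; split => [|_]; [exact: nbhs0_open | exists e => //; exists I]. Qed.

Lemma nbhs0S e r I J : e <= r -> I `<=` J -> nbhs0 e I `<=` nbhs0 r J.
Proof.
move=> er IJ x [x0|[n In nx]]; first by left; exact: le_ball x0.
by right; exists n; [exact: IJ | exact: le_ball nx].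
Qed.

Lemma nbhs0_ball e r I y z : nbhs0 e I z -> ball z r y -> nbhs0 (e + r) I y.
Proof.
case=> [z0|[n In nz]] zy; first by left; exact: ball_triangle z0 zy.
by right; exists n => //; exact: ball_triangle nz zy.
Qed.

Lemma pt_sep m n : m != n -> 1 <= `|pt m - pt n|.
Proof.
wlog mn : m n / (m < n)%nat.
  move=> gen; rewrite neq_ltn => /orP [] mn.
  - by apply: gen; rewrite // neq_ltn mn.
  - by rewrite distrC; apply: gen; rewrite // neq_ltn mn ?orbT.
move=> _; rewrite distrC /pt -natrB ?ger0_norm ?ler1n ?ler0n //; lia.
Qed.

Lemma nbhs0_pt e I n : e <= 1 / 2 -> nbhs0 e I (pt n) -> I n.
Proof.
move=> e_half [|[m Im]]; rewrite /ball /=.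
- by rewrite sub0r normrN /pt normr_nat -natr1; have := ler0n R n; lra.
- by have [<- //|/pt_sep] := eqVneq m n; lra.
Qed.

Lemma tau_of_coarser X : coarser_than_euclid (tau_of X).
Proof. by move=> U []. Qed.

Lemma tau_of_open0 X (U : set R) : open U -> ~ U 0 -> tau_of X U.
Proof. by move=> oU U0; split => // /U0. Qed.

Lemma tau_of_punct X (U : set R) : open U -> tau_of X (U `\` [set 0]).
Proof.
move=> oU; apply: tau_of_open0 => [|[_]]; last exact.
by rewrite setDE; exact: openI oU open_neq0.
Qed.

Lemma tau_ofU X U V : tau_of X U -> tau_of X V -> tau_of X (U `|` V).
Proof.
move=> [oU hU] [oV hV]; split; first exact: openU.
by case=> [/hU|/hV] [e e0 [I fI sub]]; exists e => //; exists I => // x /sub; [left|right].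
Qed.

Lemma tau_of_topology X : is_topology (tau_of X).
Proof.
split.
- split=> [|_]; first exact: openT.
  by exists 1 => //; exists setT => //; exact: branch_filterT.
- by split=> [|[]]; exact: open0.
- move=> F FT; split; first by apply: bigcup_open => U /FT [].
  move=> [U FU U0]; have [_ /(_ U0) [e e0 [I fI sub]]] := FT U FU.
  by exists e => //; exists I => // x /sub Ux; exists U.
- move=> U V [oU hU] [oV hV]; split=> [|[/hU [e e0 [I fI sU]] /hV [e' e'0 [J fJ sV]]]].
    exact: openI.
  exists (Num.min e e'); first by rewrite lt_min e0 e'0.
  exists (I `&` J); first exact: branch_filterI.
  move=> x nx; split; [apply: sU | apply: sV]; apply: nbhs0S nx => //;
    by rewrite ?ge_min ?lexx ?orbT // => n [].
Qed.

Lemma nbhs0_away X (y : R) : y != 0 -> exists2 e, 0 < e &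
  exists2 I, branch_filter X I & forall z, nbhs0 e I z -> ~ ball y e z.
Proof.
move=> y0; have ny_gt0 : 0 < `|y| by rewrite normr_gt0.
pose m := Num.bound `|y|; have ym : `|y| < m%:R by apply: archi_boundP.
pose e := Num.min (`|y| / 2) (1 / 2).
have ey : e <= `|y| / 2 by rewrite ge_min lexx.
have e_half : e <= 1 / 2 by rewrite ge_min lexx orbT.
exists e; first by rewrite lt_min; apply/andP; split; lra.
exists [set n | (m <= n)%nat]; first exact: branch_filter_ge.
move=> z [z0|[n mn nz]].
- by apply: (ball_disjoint _ z0); rewrite sub0r normrN; lra.
- apply: (ball_disjoint _ nz).
  have := ler_norm (pt n - y); have := ler_norm y.
  have : m%:R <= n%:R :> R by rewrite ler_nat.
  by rewrite /pt -natr1; lra.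
Qed.

Lemma tau_of_hausdorff X : hausdorff_top (tau_of X).
Proof.
move=> x y; wlog y0 : x y / y != 0.
  move=> gen xy; have [y0|y0] := eqVneq y 0; last exact: gen.
  have x0 : x != 0 by apply/eqP => x0; apply: xy; rewrite x0 y0.
  have [U [V [tU tV Uy Vx UV]]] := gen y x x0 (nesym xy).
  by exists V, U; split => //; rewrite setIC.
move=> xy; have [->|x0] := eqVneq x 0.
- have [e e0 [I fI eI]] := nbhs0_away X y y0.
  exists (nbhs0 e I), (ball y e `\` [set 0]); split.
  + exact: nbhs0_tau.
  + exact/tau_of_punct/ballR_open.
  + exact: nbhs0_0.
  + by split; [exact: ballxx | exact/eqP].
  by apply/seteqP; split => // z [/eI zy [/zy]].
- pose r := `|x - y| / 2.
  have r0 : 0 < r by rewrite divr_gt0 // normr_gt0 subr_eq0; exact/eqP.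
  exists (ball x r `\` [set 0]), (ball y r `\` [set 0]); split.
  + exact/tau_of_punct/ballR_open.
  + exact/tau_of_punct/ballR_open.
  + by split; [exact: ballxx | exact/eqP].
  + by split; [exact: ballxx | exact/eqP].
  apply/seteqP; split => // z [[xz _] [yz _]]; exfalso.
  by apply: (ball_disjoint _ xz yz); rewrite /r; lra.
Qed.

Lemma tau_of_in_L X : in_L (tau_of X).
Proof.
by split; [exact: tau_of_topology | exact: tau_of_hausdorff | exact: tau_of_coarser].
Qed.

Lemma tau_of_dense X (D : set R) : tdense (tau_of X) D -> dense D.
Proof.
move=> dD O [x Ox] oO.
have [y Oy y0] : exists2 y, O y & y != 0.
  have [r r0 rO] := open_has_ball oO Ox.
  have [x0|] := eqVneq x 0; last by exists x.
  exists (r / 2); last by apply/eqP; lra.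
  by apply: rO; rewrite /ball /= x0 sub0r normrN ger0_norm; lra.
have [|z [[Oz _] Dz]] := dD _ (tau_of_punct X O oO); last by exists z.
by exists y; split => // /eqP; exact/negP.
Qed.

Lemma tau_of_baire X : baire (tau_of X).
Proof.
move=> G tG dG U tU U0.
have : dense (\bigcap_n G n).
  apply: (Baire (U := R^o)) => n.
  by split; [exact: tau_of_coarser X _ (tG n) | exact: tau_of_dense (dG n)].
by move/(_ U U0 (tau_of_coarser X U tU)).
Qed.

Definition far (P : set R) (x : R) : Prop := exists2 r, 0 < r & ball x r `<=` ~` P.

Lemma far_sub P Q x : P `<=` Q -> far Q x -> far P x.
Proof. by move=> PQ [r r0 rQ]; exists r => // y /rQ Qy /PQ. Qed.

Lemma far_setU P Q x : far P x -> far Q x -> far (P `|` Q) x.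
Proof.
move=> [r r0 rP] [s s0 sQ]; exists (Num.min r s); first by rewrite lt_min r0 s0.
move=> y xy [/(rP y)|/(sQ y)]; apply; apply: le_ball xy; rewrite ge_min lexx ?orbT //.
Qed.

Lemma open_far (F : set R) x : open (~` F) -> ~ F x -> far F x.
Proof. by move=> oF Fx; have [r r0 rF] := open_has_ball oF Fx; exists r. Qed.

Lemma tau_of_shrink X W : tau_of X W -> W 0 ->
  exists2 W', tau_of X W' /\ W' 0 & forall y, ~ W y -> far W' y.
Proof.
move=> [_ hW] W0; have [e e0 [I fI eW]] := hW W0.
have e20 : 0 < e / 2 by lra.
exists (nbhs0 (e / 2) I); first by split; [exact: nbhs0_tau | exact: nbhs0_0].
move=> y Wy; exists (e / 2) => // z yz zW; apply: Wy; apply: eW.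
by rewrite [e]splitr; exact: nbhs0_ball zW (ball_sym yz).
Qed.

(* The half balls that separate separated sets in a metric space. *)
Definition sep_nbhs (P Q : set R) : set R :=
  \bigcup_(a in P) \bigcup_(r in [set r | [/\ 0 < r, r <= `|a| & ball a r `<=` ~` Q]])
    ball a (r / 2).

Lemma sep_nbhs_tau X P Q : tau_of X (sep_nbhs P Q).
Proof.
apply: tau_of_open0; first by do 2 (apply: bigcup_open => ? _); exact: ballR_open.
move=> [a _ [r [r0 ra _]]]; rewrite /ball /= subr0; lra.
Qed.

Lemma sep_nbhs_disj P Q : sep_nbhs P Q `&` sep_nbhs Q P = set0.
Proof.
suff no_both (P' Q' : set R) a b r s x : Q' b -> ball a r `<=` ~` Q' -> s <= r ->
    ball a (r / 2) x -> ball b (s / 2) x -> False.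
  apply/seteqP; split => // x [[a Pa [r [_ _ aQ] ax]] [b Qb [s [_ _ bP] bx]]].
  have [sr|/ltW rs] := leP s r.
  - exact: no_both Qb aQ sr ax bx.
  - exact: no_both Pa bP rs bx ax.
move=> Qb aQ sr ax bx; apply: (aQ b) => //.
by have := ball_triangle ax (ball_sym bx); rewrite /ball /=; lra.
Qed.

Lemma sep_nbhs_anti P Q Q' : Q `<=` Q' -> sep_nbhs P Q' `<=` sep_nbhs P Q.
Proof.
move=> QQ' x [a Pa [r [r0 ra aQ'] ax]]; exists a => //; exists r => //.
by split => // y /aQ' Q'y /QQ'.
Qed.

Lemma sep_nbhs_cover P Q a : P a -> a != 0 -> far Q a -> sep_nbhs P Q a.
Proof.
move=> Pa a0 [r r0 rQ]; exists a => //; exists (Num.min r `|a|); last first.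
  by apply: ballxx; rewrite divr_gt0 // lt_min r0 normr_gt0.
split; first by rewrite lt_min r0 normr_gt0.
- by rewrite ge_min lexx orbT.
- by apply: subset_trans rQ; apply: le_ball; rewrite ge_min lexx.
Qed.

Lemma tau_of_separate {X A B W : set R} :
  tau_of X W -> (A 0 -> W 0) -> ~ B 0 ->
  (forall a, A a -> a != 0 -> far B a) -> (forall b, B b -> far (A `|` W) b) ->
  exists U V, [/\ tau_of X U, tau_of X V, A `<=` U, B `<=` V & U `&` V = set0].
Proof.
move=> tW AW B0 farB farAW.
exists (sep_nbhs A B `|` W), (sep_nbhs B (A `|` W)); split.
- by apply: tau_ofU => //; exact: sep_nbhs_tau.
- exact: sep_nbhs_tau.
- move=> a Aa; have [a0|a0] := eqVneq a 0; first by right; rewrite a0; apply: AW; rewrite -a0.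
  by left; apply: sep_nbhs_cover => //; exact: farB.
- move=> b Bb; apply: sep_nbhs_cover => //; last exact: farAW.
  by apply/eqP => b0; apply: B0; rewrite -b0.
apply/seteqP; split => // x [[ABx|Wx] Bx].
- by rewrite -(sep_nbhs_disj A B); split => //; exact: sep_nbhs_anti Bx.
- case: Bx => b _ [r [r0 _ bAW] bx]; apply: (bAW x); last by right.
  by apply: le_ball bx; lra.
Qed.

Lemma tau_of_completely_normal X : completely_normal (tau_of X).
Proof.
move=> S F1 F2 c1 c2 SF.
suff [U [V [tU tV SU SV UV]]] : exists U V,
    [/\ tau_of X U, tau_of X V, S `&` F1 `<=` U, S `&` F2 `<=` V & U `&` V = set0].
  by exists U, V; split => //; rewrite -setIA UV setI0.
have disj x : S x -> F1 x -> F2 x -> False.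
  by move=> Sx F1x F2x; have : (S `&` F1 `&` F2) x by []; rewrite SF.
wlog nB0 : F1 F2 c1 c2 SF disj / ~ (S `&` F2) 0.
  move=> gen; have [[S0 F20]|] := pselect ((S `&` F2) 0); last exact: gen.
  have [|||U [V [tU tV SU SV UV]]] := gen F2 F1 c2 c1.
  - by rewrite setIAC.
  - by move=> x Sx F2x F1x; exact: disj Sx F1x F2x.
  - by case=> _ F10; exact: disj S0 F10 F20.
  by exists V, U; split => //; rewrite setIC.
have [W [tW AW] farW] : exists2 W, tau_of X W /\ ((S `&` F1) 0 -> W 0) &
    forall b, (S `&` F2) b -> far W b.
  have [[S0 F10]|nA0] := pselect ((S `&` F1) 0); last first.
    exists set0; first by split=> [|/nA0 //]; apply: tau_of_open0 => //; exact: open0.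
    by move=> b _; exists 1 => // y _ [].
  have [|W [tW W0] farW] := tau_of_shrink X _ c2.
    by move=> F20; exact: disj S0 F10 F20.
  by exists W => // b [_ F2b]; apply: farW.
apply: (tau_of_separate tW AW nB0).
- move=> a [Sa F1a] _; apply: far_sub (@subIsetr _ S F2) _.
  by apply: open_far (tau_of_coarser X _ c2) _ => F2a; exact: disj Sa F1a F2a.
- move=> b [Sb F2b]; apply: far_setU (farW _ (conj Sb F2b)).
  apply: far_sub (@subIsetr _ S F1) _.
  by apply: open_far (tau_of_coarser X _ c1) _ => F1b; exact: disj Sb F1b F2b.
Qed.

Lemma tau_of_sub X Y : tau_of X = tau_of Y -> X `<=` Y.
Proof.
move=> eXY t Xt; apply: contrapT => Yt.
have : tau_of Y (nbhs0 (1 / 2) (~` branch t)).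
  by rewrite -eXY; apply: nbhs0_tau; [lra | exact: branch_filter_branchC].
have U0 : nbhs0 (1 / 2) (~` branch t) 0 by apply: nbhs0_0; lra.
case=> _ /(_ U0) [e e0 [J fJ JU]].
apply: (branchC_notin_filter Y t Yt); apply: branch_filterS fJ => n Jn.
by apply: (@nbhs0_pt (1 / 2)) => //; apply: JU; right; exists n => //; exact: ballxx.
Qed.

Lemma tau_of_inj : injective tau_of.
Proof. by move=> X Y e; apply/seteqP; split; apply: tau_of_sub. Qed.

(** * Homeomorphism classes *)

Definition is_homeo (t t' : set (set R)) (f g : R -> R) : Prop :=
  [/\ cancel f g, cancel g f,
      (forall V, t' V -> t (f @^-1` V)) & (forall U, t U -> t' (g @^-1` U))].

Lemma homeomorphic_refl t : homeomorphic t t.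
Proof. by exists id, id. Qed.

Lemma homeomorphic_sym {t t'} : homeomorphic t t' -> homeomorphic t' t.
Proof. by move=> [f [g [fg gf ft gt]]]; exists g, f. Qed.

Lemma homeomorphic_trans {t1 t2 t3} :
  homeomorphic t1 t2 -> homeomorphic t2 t3 -> homeomorphic t1 t3.
Proof.
move=> [f [g [fg gf ft gt]]] [f' [g' [fg' gf' ft' gt']]].
exists (f' \o f), (g \o g'); split => [x|x|V /ft' /ft|U /gt /gt'] //=.
- by rewrite fg' fg.
- by rewrite gf gf'.
Qed.

Lemma is_homeo_image {t t' f g} : is_homeo t t' f g -> t' = [set V | t (f @^-1` V)].
Proof.
move=> [_ gf ft gt]; apply/seteqP; split => V; first exact: ft.
by move=> /gt; congr t'; apply/funext => x /=; rewrite gf.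
Qed.

Lemma cont_at_tau_of {t Y} {f : R -> R} {x : R} : coarser_than_euclid t ->
  (forall V, tau_of Y V -> t (f @^-1` V)) -> f x != 0 -> {for x, continuous f}.
Proof.
move=> ct ft fx0 A /nbhs_ballP [e e0 eA].
apply: (@filterS _ _ _ (ball (f x) e `\` [set 0])); first by move=> y [/eA].
apply: open_nbhs_nbhs; split; first exact/ct/ft/tau_of_punct/ballR_open.
by split; [exact: ballxx | exact/eqP].
Qed.

Lemma cont_at_eq_rat (f1 f2 : R -> R) x :
  {for x, continuous f1} -> {for x, continuous f2} ->
  (forall k, f1 (rat_seq k) = f2 (rat_seq k)) -> f1 x = f2 x.
Proof.
move=> c1 c2 eqQ; apply: Rhausdorff => A B /c1 f1A /c2 f2B.
have /nbhs_ballP [r r0 rAB] : nbhs x (f1 @^-1` A `&` f2 @^-1` B) by apply: filterI.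
have [k xk] := rat_seq_dense x r0; have [Aq Bq] := rAB _ xk.
by exists (f1 (rat_seq k)); split => //; rewrite eqQ.
Qed.

(* A homeomorphism onto some [tau_of Y] is continuous off the preimage of [0], so
   it is determined by its values at the rationals and that preimage. *)
Definition homeo_trace (f g : R -> R) : nat -> R :=
  fun n => if n is k.+1 then f (rat_seq k) else g 0.

Lemma homeo_trace_inj t Y1 Y2 f1 g1 f2 g2 : coarser_than_euclid t ->
  is_homeo t (tau_of Y1) f1 g1 -> is_homeo t (tau_of Y2) f2 g2 ->
  homeo_trace f1 g1 = homeo_trace f2 g2 -> Y1 = Y2.
Proof.
move=> ct h1 h2 e12.
have g0 : g1 0 = g2 0 by have := congr1 (fun c => c 0%nat) e12.
have fq k : f1 (rat_seq k) = f2 (rat_seq k) by have := congr1 (fun c => c k.+1) e12.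
have f12 : f1 = f2.
  case: (h1) (h2) => [fg1 gf1 ft1 _] [fg2 gf2 ft2 _]; apply/funext => x.
  have [->|x0] := eqVneq x (g1 0); first by rewrite gf1 g0 gf2.
  have f1x0 : f1 x != 0 by apply: contra_neq x0 => <-; rewrite fg1.
  have f2x0 : f2 x != 0 by apply: contra_neq x0; rewrite g0 => <-; rewrite fg2.
  apply: cont_at_eq_rat fq.
  - exact: cont_at_tau_of ct ft1 f1x0.
  - exact: cont_at_tau_of ct ft2 f2x0.
by apply: tau_of_inj; rewrite (is_homeo_image h1) (is_homeo_image h2) f12.
Qed.

Lemma uncurry_image_inj {J T U : Type} {e : J * T -> U} :
  injective e -> injective (fun u : J -> set T => e @` [set p | u p.1 p.2]).
Proof.
move=> e_inj u v /= euv; apply/funext => j; apply/funext => r.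
by have := congr1 (fun A => A (e (j, r))) euv; rewrite !image_inj.
Qed.

(* The diagonal argument of König's theorem: if [X ^ J] injects into [X] and
   [X] injects into [K * J], then [X] injects into [K]. *)
Lemma konig_diagonal {J K X : Type} {c : (J -> X) -> X} {e1 : X -> K} {e2 : X -> J} :
  injective c -> (forall x y, e1 x = e1 y -> e2 x = e2 y -> x = y) ->
  exists h : X -> X, injective (e1 \o h).
Proof.
move=> c_inj e_inj.
have [[j hj]|none] := pselect (exists j, forall x, exists u, u j = x /\ e2 (c u) = j).
  have /choice [u hu] := hj; exists (c \o u) => x y /= exy.
  have /c_inj eu := e_inj _ _ exy (etrans (hu x).2 (esym (hu y).2)).
  by rewrite -(hu x).1 -(hu y).1 eu.
have /choice [y hy] : forall j, exists x, forall u, u j = x -> e2 (c u) <> j.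
  move=> j; apply: contrapT => hj; apply: none; exists j => x; apply: contrapT => hx.
  by apply: hj; exists x => u ujx e; apply: hx; exists u.
by case: (hy _ y erefl erefl).
Qed.

Definition homeo_class (X : set R) : set (set R) :=
  [set Y | homeomorphic (tau_of X) (tau_of Y)].

Definition homeo_maps (X : set R) : (R -> R) * (R -> R) :=
  get [set fg | is_homeo (tau_of (get (homeo_class X))) (tau_of X) fg.1 fg.2].

Definition homeo_code (X : set R) : nat -> R :=
  homeo_trace (homeo_maps X).1 (homeo_maps X).2.

Lemma homeo_mapsP X :
  is_homeo (tau_of (get (homeo_class X))) (tau_of X) (homeo_maps X).1 (homeo_maps X).2.
Proof.
apply: (@getPex _ [set fg | is_homeo _ _ fg.1 fg.2]).
have : homeo_class X (get (homeo_class X)).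
  by apply: getPex; exists X; exact: homeomorphic_refl.
by move=> /homeomorphic_sym [f [g fg]]; exists (f, g).
Qed.

Lemma homeo_class_eq X Y :
  homeomorphic (tau_of X) (tau_of Y) -> homeo_class X = homeo_class Y.
Proof.
move=> XY; apply/seteqP; split => Z.
- exact: homeomorphic_trans (homeomorphic_sym XY).
- exact: homeomorphic_trans XY.
Qed.

Lemma homeo_class_code_inj X Y :
  homeo_class X = homeo_class Y -> homeo_code X = homeo_code Y -> X = Y.
Proof.
move=> eXY; have := homeo_mapsP X; have := homeo_mapsP Y; rewrite /homeo_code eXY.
case: (homeo_maps X) (homeo_maps Y) => [f1 g1] [f2 g2] /= h2 h1.
exact: homeo_trace_inj (tau_of_coarser _) h1 h2.
Qed.

Theorem theorem1 :
  exists T : set (set (set R)),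
    [/\ T `<=` in_L,
        (T #= [set: set R])%card,
        (forall tau, T tau -> completely_normal tau /\ baire tau) &
        (forall tau tau', T tau -> T tau' -> tau <> tau' -> ~ homeomorphic tau tau')].
Proof.
have [h hinj] := konig_diagonal (uncurry_image_inj encode_pair_inj) homeo_class_code_inj.
exists (range (tau_of \o h)); split.
- by move=> _ [x _ <-]; exact: tau_of_in_L.
- by apply: inj_card_eq => x y _ _ /= e; apply: hinj; rewrite /= /homeo_class e.
- by move=> _ [x _ <-]; split; [exact: tau_of_completely_normal | exact: tau_of_baire].
- move=> _ _ [x _ <-] [y _ <-] ne /homeo_class_eq exy; apply: ne.
  by rewrite /= (hinj _ _ exy).
Qed.
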